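(* Let $(\mathrm X,\mathsf d,\mathfrak m)$ be a geodesic metric measure space and let $\{x_i\}_{i\in I}$ be a countable collection of distinct points of $\mathrm X$. For $i,j\in I$ and $\delta\in\mathbb R$ let $U^\delta_{i,j}=\{x\in\mathrm X:\mathsf d(x,x_i)-\mathsf d(x,x_j)<\delta\}$. Then for any $i,j\in I$ and $\delta>-\mathsf d(x_i,x_j)$, the set $U^\delta_{i,j}$ is star-shaped at $x_i$. Moreover, there exists a countable set $S_{i,j}\subset(-\mathsf d(x_i,x_j),\infty)$ such that $$\mathfrak m(\{x\in\mathrm X:\mathsf d(x,x_i)-\mathsf d(x,x_j)=\delta\})=0\qquad\forall\,\delta\in(-\mathsf d(x_i,x_j),\infty)\setminus S_{i,j}.$$
   Context: A metric measure space is a complete separable metric space with a non-negative, non-zero Borel measure finite on bounded sets; geodesic means any two points are joined by a geodesic $\gamma:[0,1]\to\mathrm X$, $\mathsf d(\gamma_s,\gamma_t)=|s-t|\mathsf d(\gamma_0,\gamma_1)$. A Borel set $T$ is star-shaped at $x\in T$ if for every $y\in T$ there is a geodesic from $x$ to $y$ contained in $T$. *)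

From HB Require Import structures.
From mathcomp Require Import all_boot all_order all_algebra.
From mathcomp Require Import all_classical all_reals all_analysis.
Set Implicit Arguments. Unset Strict Implicit. Unset Printing Implicit Defensive.
Import Order.TTheory GRing.Theory Num.Theory.
Local Open Scope classical_set_scope.
Local Open Scope ring_scope.

Section MMS.
Context {R : realType} {X : Type}.
Implicit Types (dist : X -> X -> R).

Definition is_metric dist : Prop :=
  (forall x y, 0 <= dist x y) /\
  (forall x y, dist x y = 0 <-> x = y) /\
  (forall x y, dist x y = dist y x) /\
  (forall x y z, dist x z <= dist x y + dist y z).

Definition dcauchy dist (u : nat -> X) : Prop :=
  forall e : R, 0 < e -> exists N : nat,
    forall m n : nat, (N <= m)%N -> (N <= n)%N -> dist (u m) (u n) < e.

Definition dconverges dist (u : nat -> X) (x : X) : Prop :=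
  forall e : R, 0 < e -> exists N : nat, forall n : nat, (N <= n)%N -> dist (u n) x < e.

Definition dcomplete dist : Prop :=
  forall u : nat -> X, dcauchy dist u -> exists x, dconverges dist u x.

Definition dseparable dist : Prop :=
  exists D : set X, countable D /\
    forall x (e : R), 0 < e -> exists y, D y /\ dist x y < e.

Definition dopen dist (A : set X) : Prop :=
  forall x, A x -> exists r : R, 0 < r /\ forall y, dist x y < r -> A y.

Definition dbounded dist (A : set X) : Prop :=
  exists x (r : R), forall y, A y -> dist x y < r.

Definition is_geodesic dist (gamma : R -> X) (x y : X) : Prop :=
  gamma 0 = x /\ gamma 1 = y /\
  forall s t : R, 0 <= s <= 1 -> 0 <= t <= 1 ->
    dist (gamma s) (gamma t) = `|s - t| * dist x y.

Definition geodesic_space dist : Prop :=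
  forall x y, exists gamma, is_geodesic dist gamma x y.

End MMS.

Definition metric_measure_space {R : realType} {d : measure_display}
  {X : measurableType d} (dist : X -> X -> R)
  (mu : {measure set X -> \bar R}) : Prop :=
  is_metric dist /\ dcomplete dist /\ dseparable dist /\
  (@measurable d X = <<s [set A | dopen dist A] >>) /\
  mu setT <> 0%E /\
  (forall A : set X, measurable A -> dbounded dist A -> (mu A < +oo)%E).

Definition star_shaped {R : realType} {d : measure_display}
  {X : measurableType d} (dist : X -> X -> R) (T : set X) (x : X) : Prop :=
  measurable T /\ T x /\
  forall y, T y -> exists gamma : R -> X, is_geodesic dist gamma x y /\
    forall t : R, 0 <= t <= 1 -> T (gamma t).

Definition Uset {R : realType} {X : Type} (dist : X -> X -> R)
  (xi xj : X) (delta : R) : set X :=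
  [set x | dist x xi - dist x xj < delta].

From mathcomp Require Import all_boot all_order all_algebra finmap.
From mathcomp Require Import all_classical all_reals all_analysis.
From mathcomp Require Import lra.
Import Order.TTheory GRing.Theory Num.Theory.
Local Open Scope classical_set_scope.
Local Open Scope ring_scope.

(* Along a geodesic g from x_i to y, the function f x := d(x, x_i) - d(x, x_j)
   never exceeds f y, because d(g t, x_i) = t d(x_i, y) while
   d(g t, x_j) >= d(y, x_j) - (1 - t) d(x_i, y); since f is 2-Lipschitz its
   strict sublevel sets are open, hence star-shaped Borel sets.  The level sets
   of f are disjoint and closed, and mu is sigma-finite because balls have
   finite measure; inside a set of finite measure only finitely many disjoint
   pieces can have measure > eps, so only countably many level sets
   charge mu. *)

Section trivIset_measure.
Context d (T : measurableType d) (R : realType).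
Context (mu : {measure set T -> \bar R}).
Context (I : choiceType) (F : I -> set T).
Hypotheses (mF : forall i, measurable (F i)) (tF : trivIset setT F).

Lemma trivIset_measure_gt_finite (B : set T) (eps : R) :
  measurable B -> (mu B < +oo)%E -> 0 < eps ->
  finite_set [set i | (eps%:E < mu (F i `&` B))%E].
Proof.
move=> mB Bfin eps_gt0; apply: contrapT => /infinite_set_fsetP inf.
have mu_ge n : ((n%:R * eps)%:E <= mu B)%E.
  have [A Asub An] := inf n.
  have tA : trivIset [set` A] (fun i => F i `&` B).
    apply: (sub_trivIset (D' := setT)) => //; exact: trivIset_setIr.
  have mFB i : measurable (F i `&` B) by exact: measurableI.
  have UA_sub : \big[setU/set0]_(i <- A) (F i `&` B) `<=` B.
    by rewrite -bigcup_fset => x [i _ []].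
  have mUA : measurable (\big[setU/set0]_(i <- A) (F i `&` B)).
    exact: bigsetU_measurable.
  apply: le_trans (le_measure _ _ _ UA_sub); rewrite ?inE //.
  rewrite measure_fbigsetU //.
  apply: (@le_trans _ _ (\sum_(i <- A) eps%:E)%E).
    rewrite sumEFin big_const_seq count_predT lee_fin.
    by rewrite iter_addr_0 -[eps *+ _]mulr_natl ler_pM2r // ler_nat.
  rewrite big_seq [X in (_ <= X)%E]big_seq; apply: lee_sum => i iA.
  exact/ltW/Asub.
have muB_fin : mu B \is a fin_num by rewrite ge0_fin_numE.
have ratio_ge0 : 0 <= fine (mu B) / eps.
  by apply: divr_ge0; [exact: fine_ge0 | exact: ltW].
have := mu_ge (Num.bound (fine (mu B) / eps)).
rewrite -[X in (_ <= X)%E](fineK muB_fin) lee_fin -ler_pdivlMr // leNgt.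
by rewrite archi_boundP.
Qed.

Lemma sigma_finite_trivIset_countable : sigma_finite setT mu ->
  countable [set i | mu (F i) != 0%E].
Proof.
move=> [B BT mB].
have mFB i n : measurable (F i `&` B n) by exact: measurableI (mB n).1.
have charged_piece i : mu (F i) != 0%E -> exists n, mu (F i `&` B n) != 0%E.
  move=> /eqP Fi_neq0; apply: contrapT => /forallNP Fi_B0; apply: Fi_neq0.
  have cover : F i `<=` \bigcup_n (F i `&` B n).
    move=> x Fix; have [n _ Bnx] : (\bigcup_n B n) x by rewrite -BT.
    by exists n.
  apply/eqP; rewrite eq_le measure_ge0 andbT.
  apply: le_trans (measure_sigma_subadditive mu (mFB i) (mF i) cover) _.
  by rewrite eseries0 // => n _ _; apply/eqP/negPn/negP/Fi_B0.
pose charged n m := [set i | ((m.+1%:R^-1)%:E < mu (F i `&` B n))%E].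
apply: (@sub_countable _ _ _ (\bigcup_n \bigcup_m charged n m)).
  apply: subset_card_le => i /charged_piece[n FBn_neq0]; exists n => //.
  have FBn_fin : mu (F i `&` B n) \is a fin_num.
    rewrite ge0_fin_numE //; apply: le_lt_trans (mB n).2.
    apply: le_measure; rewrite ?inE; last exact: subIsetr.
      exact: mFB.
    exact: (mB n).1.
  have [y yE] : exists y, mu (F i `&` B n) = y%:E.
    by exists (fine (mu (F i `&` B n))); rewrite fineK.
  have y_gt0 : 0 < y.
    rewrite lt_def -lee_fin -yE measure_ge0 andbT.
    by move: FBn_neq0; rewrite yE eqe.
  exists (Num.truncn y^-1) => //=.
  rewrite /charged /= yE lte_fin invf_plt ?posrE ?ltr0Sn //.
  exact: truncnS_gt.
apply: bigcup_countable => // n _; apply: bigcup_countable => // m _.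
apply/finite_set_countable/trivIset_measure_gt_finite => //.
- exact: (mB n).1.
- exact: (mB n).2.
Qed.

End trivIset_measure.

Section metric.
Context {R : realType} {X : Type} {dist : X -> X -> R}.
Hypothesis dist_metric : is_metric dist.

Let distC x y : dist x y = dist y x.
Proof. by case: dist_metric => _ [_ []]. Qed.

Let dist_triangle x y z : dist x z <= dist x y + dist y z.
Proof. by case: dist_metric => _ [_ [_]]. Qed.

Lemma dopen_sublevel (f : X -> R) (k r : R) : 0 <= k ->
  (forall x y, `|f x - f y| <= k * dist x y) -> dopen dist [set x | f x < r].
Proof.
move=> k_ge0 f_lip x /= fx_lt; set rad := (r - f x) / (k + 1).
have rad_gt0 : 0 < rad by rewrite divr_gt0 // ?subr_gt0 // ltr_wpDl.
have radE : rad * (k + 1) = r - f x.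
  by rewrite /rad divfK // lt0r_neq0 // ltr_wpDl.
exists rad; split => // y dxy_lt /=.
have := f_lip x y; rewrite ler_norml => /andP[fxy_ge _].
have := ler_wpM2l k_ge0 (ltW dxy_lt); lra.
Qed.

Lemma dopen_superlevel (f : X -> R) (k r : R) : 0 <= k ->
  (forall x y, `|f x - f y| <= k * dist x y) -> dopen dist [set x | r < f x].
Proof.
move=> k_ge0 f_lip.
have -> : [set x | r < f x] = [set x | - f x < - r].
  by apply/seteqP; split => x /=; rewrite ltrN2.
by apply: (@dopen_sublevel _ k) => // x y; rewrite -opprD normrN.
Qed.

Lemma dist_lipschitz a x y : `|dist a x - dist a y| <= 1 * dist x y.
Proof.
rewrite mul1r ler_norml.
have := dist_triangle a x y; have := dist_triangle a y x.
rewrite (distC y x); lra.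
Qed.

Lemma dist_diff_lipschitz a b x y :
  `|(dist x a - dist x b) - (dist y a - dist y b)| <= 2 * dist x y.
Proof.
rewrite ler_norml; have := dist_triangle x y a; have := dist_triangle y x a.
have := dist_triangle x y b; have := dist_triangle y x b.
rewrite (distC y x); lra.
Qed.

Lemma geodesic_dist_diff_le (g : R -> X) a b y t : is_geodesic dist g a y ->
  0 <= t <= 1 -> dist (g t) a - dist (g t) b <= dist y a - dist y b.
Proof.
move=> [g0 [g1 g_dist]] t01; have /andP[t_ge0 t_le1] := t01.
have := g_dist t 0 t01; rewrite lexx ler01 subr0 ger0_norm // g0.
move=> /(_ isT) dta.
have := g_dist 1 t; rewrite lexx ler01 g1 ger0_norm ?subr_ge0 //.
move=> /(_ isT t01) dyt.
have := dist_triangle y (g t) b; rewrite (distC y a); lra.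
Qed.

End metric.

Section metric_measure_space.
Context {R : realType} {d : measure_display} {X : measurableType d}.
Context {dist : X -> X -> R} {mu : {measure set X -> \bar R}}.
Hypothesis mms : metric_measure_space dist mu.

Let dist_metric : is_metric dist. Proof. by case: mms. Qed.

Lemma dopen_measurable (A : set X) : dopen dist A -> measurable A.
Proof. by case: mms => _ [_ [_ [-> _]]]; exact: sub_sigma_algebra. Qed.

Lemma mms_sigma_finite (x0 : X) : sigma_finite setT mu.
Proof.
have mball n : measurable [set x | dist x0 x < n%:R].
  apply/dopen_measurable/(dopen_sublevel (dist x0) _ _ ler01).
  exact: dist_lipschitz.
exists (fun n => [set x | dist x0 x < n%:R]) => [|n].
  apply/seteqP; split => // x _; exists (Num.truncn (dist x0 x)).+1 => //.
  exact: truncnS_gt.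
split => //; case: mms => _ [_ [_ [_ [_ mu_bounded]]]].
by apply: mu_bounded => //; exists x0, n%:R.
Qed.

Lemma dist_diff_level_measurable a b r :
  measurable [set x | dist x a - dist x b = r].
Proof.
have f_lip := dist_diff_lipschitz dist_metric a b.
rewrite -[X in measurable X]setCK; apply: measurableC.
have -> : ~` [set x | dist x a - dist x b = r] =
    [set x | dist x a - dist x b < r] `|` [set x | r < dist x a - dist x b].
  apply/seteqP; split => x /=; first by move/eqP; rewrite neq_lt => /orP.
  by case=> fx_r; apply/eqP; rewrite ?(lt_eqF fx_r) ?(gt_eqF fx_r).
apply: measurableU; apply: dopen_measurable.
  exact: (dopen_sublevel _ _ _ _ f_lip).
exact: (dopen_superlevel _ _ _ _ f_lip).
Qed.

Lemma Uset_star_shaped : geodesic_space dist -> forall a b delta,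
  - dist a b < delta -> star_shaped dist (Uset dist a b delta) a.
Proof.
move=> geo a b delta delta_gt; split; [|split].
- apply/dopen_measurable.
  exact: dopen_sublevel _ _ _ _ (dist_diff_lipschitz dist_metric a b).
- case: dist_metric => _ [dist_eq0 _].
  by rewrite /Uset /= (proj2 (dist_eq0 a a)) // sub0r.
- move=> y Uy; have [g g_geo] := geo a y; exists g; split => // t t01.
  exact: le_lt_trans (geodesic_dist_diff_le dist_metric _ _ b _ _ g_geo t01) Uy.
Qed.

End metric_measure_space.

Theorem lemma6p2 (R : realType) (d : measure_display) (X : measurableType d)
  (dist : X -> X -> R) (mu : {measure set X -> \bar R})
  (I : Type) (xs : I -> X) :
  metric_measure_space dist mu ->
  geodesic_space dist ->
  countable [set: I] ->
  injective xs ->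
  forall i j : I,
    (forall delta : R, - dist (xs i) (xs j) < delta ->
       star_shaped dist (Uset dist (xs i) (xs j) delta) (xs i)) /\
    (exists S : set R, countable S /\
       S `<=` [set t | - dist (xs i) (xs j) < t] /\
       forall delta : R, - dist (xs i) (xs j) < delta -> ~ S delta ->
         mu [set x | dist x (xs i) - dist x (xs j) = delta] = 0%E).
Proof.
move=> mms geo _ _ i j; split.
  exact: Uset_star_shaped mms geo (xs i) (xs j).
pose level r := [set x | dist x (xs i) - dist x (xs j) = r].
exists ([set t | - dist (xs i) (xs j) < t] `&` [set r | mu (level r) != 0%E]).
split; [|split].
- apply: sub_countable (subset_card_le (@subIsetr _ _ _)) _.
  apply: sigma_finite_trivIset_countable.
  + exact: dist_diff_level_measurable mms (xs i) (xs j).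
  + exact: trivIset_preimage1.
  + exact: mms_sigma_finite mms (xs i).
- exact: subIsetl.
- by move=> delta delta_gt not_S; apply/eqP/negPn/negP => /(conj delta_gt).
Qed.
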